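(* Let $p$ be a prime. If there exists $A\subseteq\mathbb{F}_p$ with $A-A\doteq\mathcal{R}_p$, then for every prime $q$ dividing $\frac{p-1}{4}$, the multiplicative order $\operatorname{ord}_p(q)$ of $q$ modulo $p$ is odd.
   Context: $\mathcal{R}_p$ is the set of nonzero quadratic residues modulo $p$. $A-A\doteq S$ means: every element of $S$ has exactly one representation as $a'-a''$ with $a',a''\in A$, and every difference $a'-a''$ with $a'\ne a''$ in $A$ lies in $S$. (Such $A$ forces $p\equiv 1\pmod 4$ and $p=2|A|(|A|-1)+1$.) *)

From HB Require Import structures.
From mathcomp Require Import all_boot all_order all_algebra.
Set Implicit Arguments. Unset Strict Implicit. Unset Printing Implicit Defensive.
Import GRing.Theory.
Local Open Scope ring_scope.

Definition QR (p : nat) : {set 'F_p} :=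
  [set x : 'F_p | (x != 0) && [exists y : 'F_p, y * y == x]].

Definition perfect_diff (p : nat) (A S : {set 'F_p}) : Prop :=
  (forall s, s \in S ->
     #|[set xy : 'F_p * 'F_p | [&& xy.1 \in A, xy.2 \in A & xy.1 - xy.2 == s]]| = 1%N)
  /\ (forall a1 a2, a1 \in A -> a2 \in A -> a1 != a2 -> a1 - a2 \in S).

Definition is_mult_order (p q k : nat) : Prop :=
  [/\ (0 < k)%N, (q ^ k = 1 %[mod p])%N &
      forall j : nat, (0 < j)%N -> (q ^ j = 1 %[mod p])%N -> (k <= j)%N].

(* Let c := (p - 1) / 4.  Counting the differences of A gives
   |A|^2 = |A| + 2 c, and c is also the number of ways to write 1 as a
   quadratic residue plus a nonresidue.  Suppose q | c and ord_p q = 2 j, so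
   that Q := q ^ j is -1 modulo p.  In a finite field K of characteristic q,
   fix a nontrivial additive character psi of F_p and put
   hatA t := sum_(a in A) psi (t a).  Since A - A is exactly the set R of
   nonzero squares, hatA t * hatA (- t) = |A| + eta(t R) where eta_R, eta_N
   are the Gauss periods, and (|A| + eta_R) (|A| + eta_N) = c = 0 in K.  The
   Frobenius power Q maps hatA t to hatA (- t), so hatA t ^+ (Q + 1) = 0: hatA
   vanishes on all residues or on all nonresidues.  For a nonresidue s this
   kills every nonzero Fourier coefficient of the number of solutions of
   s a - b = x, which is therefore |A|^2 / p in K for every x; but this number
   is 1 at x = s a - a and 0 for some x, because |A|^2 < p. *)

From HB Require Import structures.
From mathcomp Require Import all_boot all_order all_algebra fingroup pgroup finfield.
From mathcomp Require Import ring zify.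
Set Implicit Arguments. Unset Strict Implicit. Unset Printing Implicit Defensive.
Import GRing.Theory FinRing.Theory.
Local Open Scope ring_scope.

Lemma card_partition_fibers (T J : finType) (P : pred T) (k : T -> J) :
  (\sum_(j : J) #|[set i | P i & k i == j]|)%N = #|[set i | P i]|.
Proof.
rewrite -sum1_card (partition_big k xpredT) //; apply: eq_bigr => j _.
by rewrite -sum1_card; apply: eq_bigl => i; rewrite !inE.
Qed.

Lemma sum_partition_fibers (T J : finType) (K : pzSemiRingType)
    (P : pred T) (k : T -> J) (h : J -> K) :
  \sum_(i | P i) h (k i) = \sum_(j : J) #|[set i | P i & k i == j]|%:R * h j.
Proof.
rewrite (partition_big k xpredT) //; apply: eq_bigr => j _.
rewrite (eq_bigr (fun _ => h j)); last by move=> i /andP[_ /eqP ->].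
rewrite sumr_const mulr_natl; congr (_ *+ _).
by apply: eq_card => i; rewrite !inE.
Qed.

Lemma leq_card_mapsto (T : finType) (f : T -> T) (S1 S2 : {set T}) :
  injective f -> {in S1, forall i, f i \in S2} -> (#|S1| <= #|S2|)%N.
Proof.
move=> f_inj fS; rewrite -(card_imset S1 f_inj); apply: subset_leq_card.
by apply/subsetP=> _ /imsetP[i iS ->]; apply: fS.
Qed.

Definition QNR (p : nat) : {set 'F_p} := [set x | (x != 0) && (x \notin QR p)].

Section QuadraticResidues.
Variable p : nat.
Hypothesis p_pr : prime p.
Local Notation F := 'F_p.
Local Notation R := (QR p).
Local Notation N := (QNR p).

Lemma QRP x : reflect (x != 0 /\ exists y : F, y * y = x) (x \in R).
Proof.
rewrite inE; apply: (iffP andP) => [[-> /existsP[y /eqP <-]]|[-> [y <-]]].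
  by split=> //; exists y.
by split=> //; apply/existsP; exists y.
Qed.

Lemma QR_neq0 x : x \in R -> x != 0.
Proof. by case/QRP. Qed.

Lemma QR1 : 1 \in R.
Proof. by apply/QRP; split; [exact: oner_neq0 | exists 1; rewrite mulr1]. Qed.

Lemma QR_sqr x : x != 0 -> x * x \in R.
Proof. by move=> x0; apply/QRP; split; [rewrite mulf_neq0 | exists x]. Qed.

Lemma QR_mul x y : x \in R -> y \in R -> x * y \in R.
Proof.
move=> /QRP[x0 [u xu]] /QRP[y0 [v yv]]; apply/QRP; split; first by rewrite mulf_neq0.
by exists (u * v); rewrite -xu -yv; ring.
Qed.

Lemma QR_inv x : x \in R -> x^-1 \in R.
Proof.
move=> /QRP[x0 [u xu]]; apply/QRP; split; first by rewrite invr_eq0.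
by exists u^-1; rewrite -xu invfM.
Qed.

Lemma QR_mulIl x y : x \in R -> x * y \in R -> y \in R.
Proof.
move=> xR xyR; have := QR_mul (QR_inv xR) xyR.
by rewrite mulrA mulVf ?mul1r // QR_neq0.
Qed.

Lemma inQNR x : (x \in N) = (x != 0) && (x \notin R).
Proof. by rewrite inE. Qed.

Lemma QNR_neq0 x : x \in N -> x != 0.
Proof. by rewrite inQNR => /andP[]. Qed.

Lemma QR_mul_QNR r s : r \in R -> s \in N -> r * s \in N.
Proof.
move=> rR; rewrite !inQNR => /andP[s0 sR]; rewrite mulf_neq0 ?(QR_neq0 rR) //=.
by apply: contra sR; apply: QR_mulIl.
Qed.

Lemma card_Fp_neq0 : #|[set x : F | x != 0]| = p.-1.
Proof.
have -> : [set x : F | x != 0] = [set~ 0] by apply/setP=> x; rewrite !inE.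
by rewrite cardsC1 card_Fp.
Qed.

Lemma sqr_eq_sqr_set u : u != 0 -> [set x : F | (x != 0) & x * x == u * u] = [set u; -u].
Proof.
move=> u0; apply/setP=> x; rewrite !inE; apply/idP/idP.
  case/andP=> _ /eqP xu; have : (x - u) * (x + u) == 0.
    by apply/eqP; transitivity (x * x - u * u); [ring | rewrite xu subrr].
  by rewrite mulf_eq0 subr_eq0 addr_eq0.
by case/orP=> /eqP ->; rewrite ?oppr_eq0 u0 ?mulrNN eqxx.
Qed.

Hypothesis p_odd : odd p.

Lemma Fp_two_neq0 : (2%:R : F) != 0.
Proof.
rewrite -(dvdn_pcharf (pchar_Fp p_pr)); apply: contraL p_odd => /(@dvdn_leq p 2 isT) p_le2.
by have p_gt1 := prime_gt1 p_pr; have -> : p = 2 by lia.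
Qed.

(* Squaring is two-to-one on the nonzero elements. *)
Lemma card_QR : (2 * #|R|)%N = p.-1.
Proof.
rewrite -card_Fp_neq0 -(card_partition_fibers (fun x : F => x != 0) (fun x => x * x)).
rewrite (bigID (fun y => y \in R)) /= addnC big1 ?add0n; last first.
  move=> y yR; apply/eqP; rewrite cards_eq0; apply/eqP/setP=> x; rewrite !inE.
  by apply/negP=> /andP[x0 /eqP xy]; move: yR; rewrite -xy QR_sqr.
rewrite mulnC -sum_nat_const; apply: eq_bigr => y /QRP[y0 [u yu]].
have u0 : u != 0 by apply: contraNneq y0 => u0; rewrite -yu u0 mul0r.
rewrite -yu sqr_eq_sqr_set // cards2; suff -> : u != - u by [].
apply: contraNneq u0 => uNu; have : u * 2%:R == 0 by rewrite mulr_natr mulr2n {1}uNu addNr.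
by rewrite mulf_eq0 (negbTE Fp_two_neq0) orbF.
Qed.

Lemma card_QNR : #|N| = #|R|.
Proof.
have -> : N = [set x : F | x != 0] :\: R by apply/setP=> x; rewrite !inE andbC.
rewrite cardsD.
have -> : [set x : F | x != 0] :&: R = R.
  by apply/setIidPr/subsetP=> x xR; rewrite inE QR_neq0.
by rewrite card_Fp_neq0 -card_QR mul2n -addnn addnK.
Qed.

Lemma QNR_mul s1 s2 : s1 \in N -> s2 \in N -> s1 * s2 \in R.
Proof.
move=> s1N s2N; have s0 := QNR_neq0 s1N.
have s1R : [set s1 * r | r in R] = N.
  apply/eqP; rewrite eqEcard card_imset; last exact: mulfI.
  rewrite card_QNR leqnn andbT; apply/subsetP=> _ /imsetP[r rR ->].
  by rewrite mulrC QR_mul_QNR.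
move: s2N; rewrite -s1R => /imsetP[r rR ->].
by rewrite mulrA QR_mul // QR_sqr.
Qed.

Lemma QNR_nonempty : exists s, s \in N.
Proof. by apply/card_gt0P; rewrite card_QNR; apply/card_gt0P; exists 1; exact: QR1. Qed.

End QuadraticResidues.

Section ResidueNonresidueSums.
Variable p : nat.
Hypotheses (p_pr : prime p) (p_odd : odd p) (QRN1 : -1 \in QR p).
Local Notation F := 'F_p.
Local Notation R := (QR p).
Local Notation N := (QNR p).

Definition rn_count (x : F) :=
  #|[set ry : F * F | (ry.1 \in R) && (ry.2 \in N) & ry.1 + ry.2 == x]|.

Lemma rn_count_scale (u x : F) : u != 0 -> (rn_count x <= rn_count (u * x)%R)%N.
Proof.
move=> u0; case uR : (u \in R).
  apply: (leq_card_mapsto (f := fun ry => (u * ry.1, u * ry.2))).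
    by apply: (can_inj (g := fun ry => (u^-1 * ry.1, u^-1 * ry.2))) => -[a b]; rewrite !mulKf.
  move=> [r y]; rewrite inE /= => /andP[/andP[rR yN] /eqP <-]; rewrite inE /=.
  by rewrite QR_mul // QR_mul_QNR //= mulrDr eqxx.
have uN : u \in N by rewrite inQNR u0 uR.
apply: (leq_card_mapsto (f := fun ry => (u * ry.2, u * ry.1))).
  by apply: (can_inj (g := fun ry => (u^-1 * ry.2, u^-1 * ry.1))) => -[a b]; rewrite !mulKf.
move=> [r y]; rewrite inE /= => /andP[/andP[rR yN] /eqP <-]; rewrite inE /=.
by rewrite QNR_mul // [u * r]mulrC QR_mul_QNR //=; apply/eqP; ring.
Qed.

Lemma rn_count_const x : x != 0 -> rn_count x = rn_count 1.
Proof.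
move=> x0; apply/eqP; rewrite eqn_leq.
have := rn_count_scale 1 x0; have := rn_count_scale x (invr_neq0 x0).
by rewrite mulVf // mulr1 => -> ->.
Qed.

Lemma rn_count0 : rn_count 0 = 0%N.
Proof.
apply/eqP; rewrite cards_eq0; apply/eqP/setP=> [[r y]]; rewrite in_set0 inE /=.
apply/negP=> /andP[/andP[rR yN] /eqP ry0].
have : y = -1 * r by rewrite mulN1r; apply/eqP; rewrite -addr_eq0 addrC ry0.
by move=> ey; move: yN; rewrite inQNR ey QR_mul ?andbF.
Qed.

Lemma sum_rn_count : (\sum_(x : F) rn_count x)%N = (#|R| * #|N|)%N.
Proof.
rewrite (card_partition_fibers (fun ry : F * F => (ry.1 \in R) && (ry.2 \in N))
                                (fun ry => ry.1 + ry.2)).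
by rewrite -cardsX; congr #|_|; apply/setP=> [[r y]]; rewrite !inE.
Qed.

Lemma card_QR_rn_count : #|R| = (2 * rn_count (1%R : F))%N.
Proof.
have : (\sum_(x : F) rn_count x)%N = (p.-1 * rn_count 1%R)%N.
  rewrite (bigD1 0) //= rn_count0 add0n.
  rewrite (eq_bigr (fun _ => rn_count 1)); last exact: rn_count_const.
  rewrite (eq_bigl (fun x => x \in [set x : F | x != 0])); last by move=> x; rewrite inE.
  by rewrite sum_nat_const card_Fp_neq0.
rewrite sum_rn_count card_QNR // -(card_QR p_pr p_odd).
have : (0 < #|R|)%N by apply/card_gt0P; exists 1; exact: QR1.
nia.
Qed.

End ResidueNonresidueSums.

Section AdditiveCharacter.
Variable p : nat.
Hypothesis p_pr : prime p.
Local Notation F := 'F_p.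
Local Notation R := (QR p).
Local Notation N := (QNR p).
Variables (K : fieldType) (z : K).
Hypotheses (z_p : z ^+ p = 1) (z_neq1 : z != 1).

Definition psi (x : F) : K := z ^+ x.

Lemma psi_nat i : psi i%:R = z ^+ i.
Proof. by rewrite /psi val_Fp_nat // expr_mod. Qed.

Lemma psiD x y : psi (x + y) = psi x * psi y.
Proof. by rewrite -[x]natr_Zp -[y]natr_Zp -natrD !psi_nat exprD. Qed.

Lemma psi0 : psi 0 = 1.
Proof. by rewrite /psi expr0. Qed.

Lemma sum_psi : \sum_(x : F) psi x = 0.
Proof.
have zN : z ^+ (Zp_trunc (pdiv p)).+2 = 1 by rewrite Fp_cast.
have := subrX1 z (Zp_trunc (pdiv p)).+2; rewrite zN subrr => /esym/eqP.
by rewrite mulf_eq0 subr_eq0 (negbTE z_neq1) => /eqP.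
Qed.

Lemma sum_psi_mul y : \sum_(t : F) psi (t * y) = if y == 0 then p%:R else 0.
Proof.
case: eqP => [->|/eqP y0].
  by rewrite (eq_bigr (fun _ => 1)) => [|t _]; rewrite ?sumr_const ?card_Fp ?mulr0 ?psi0.
by rewrite -(reindex_inj (mulIf y0) (P := xpredT) (F := psi)) sum_psi.
Qed.

Lemma sum_psi_neq0 : \sum_(x | x != 0) psi x = -1.
Proof. by apply/eqP; rewrite -addr_eq0 addrC -(bigD1 0 (P := xpredT)) //= sum_psi. Qed.

Lemma psi_pow_opp n x : (n%:R : F) = -1 -> psi x ^+ n = psi (- x).
Proof. by move=> n_opp; rewrite /psi -exprM -psi_nat natrM natr_Zp n_opp mulrN1. Qed.

Definition period (S : {set F}) := \sum_(x in S) psi x.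

Section QRPeriods.
Hypotheses (p_odd : odd p) (QRN1 : -1 \in R).

Lemma period_QR_scale t : t \in R -> \sum_(r in R) psi (t * r) = period R.
Proof.
move=> tR; rewrite /period [RHS](reindex_inj (mulfI (QR_neq0 tR))) /=.
by apply: eq_bigl => r; apply/idP/idP => [|/(QR_mulIl tR)//]; apply: QR_mul.
Qed.

Lemma period_QNR_scale t : t \in N -> \sum_(r in R) psi (t * r) = period N.
Proof.
move=> tN; rewrite /period [RHS](reindex_inj (mulfI (QNR_neq0 tN))) /=.
apply: eq_bigl => r; apply/idP/idP => [rR|trN]; first by rewrite mulrC QR_mul_QNR.
have r0 : r != 0 by apply: contraTneq trN => ->; rewrite mulr0 inQNR eqxx.
apply: contraLR trN => rR; have rN : r \in N by rewrite inQNR r0.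
by rewrite inQNR QNR_mul ?andbF.
Qed.

Lemma period_QR_add_QNR : period R + period N = -1.
Proof.
rewrite -sum_psi_neq0 (bigID (mem R)) /=; congr (_ + _); apply: eq_bigl => x.
  by case: (boolP (x \in R)) => xR; rewrite ?andbT ?andbF ?QR_neq0.
by rewrite inQNR andbC.
Qed.

Lemma period_QR_mul_QNR : period R * period N = - (rn_count (1 : F))%:R.
Proof.
rewrite /period big_distrlr pair_big /=.
rewrite (eq_bigr (fun ry : F * F => psi (ry.1 + ry.2))) => [|ry _]; last by rewrite psiD.
rewrite (sum_partition_fibers _ (fun ry : F * F => ry.1 + ry.2) psi) (bigD1 0) //=.
rewrite [#|_|]rn_count0 // mul0r add0r -mulrN1 -sum_psi_neq0 mulr_sumr.
by apply: eq_bigr => x x0; rewrite [#|_|](rn_count_const p_pr p_odd x0).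
Qed.

End QRPeriods.
End AdditiveCharacter.

Section PerfectDifferenceSet.
Variable p : nat.
Hypothesis p_pr : prime p.
Local Notation F := 'F_p.
Local Notation R := (QR p).
Local Notation N := (QNR p).
Variable A : {set F}.
Hypothesis hA : perfect_diff A R.

Lemma perfect_diff_exists s : s \in R -> exists a b, [/\ a \in A, b \in A & a - b = s].
Proof.
move=> sR; have /eqP/cards1P[[a b] Eab] := hA.1 s sR.
have : (a, b) \in [set ab : F * F | [&& ab.1 \in A, ab.2 \in A & ab.1 - ab.2 == s]].
  by rewrite Eab set11.
by rewrite inE => /and3P[aA bA /eqP abs]; exists a, b.
Qed.

Lemma perfect_diff_uniq s a b c d : s \in R -> a \in A -> b \in A -> c \in A -> d \in A ->
  a - b = s -> c - d = s -> a = c /\ b = d.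
Proof.
move=> sR aA bA cA dA abs cds; have /eqP/cards1P[x Ex] := hA.1 s sR.
have in_reps u v : u \in A -> v \in A -> u - v = s ->
    (u, v) \in [set ab : F * F | [&& ab.1 \in A, ab.2 \in A & ab.1 - ab.2 == s]].
  by move=> uA vA uvs; rewrite inE /= uA vA uvs eqxx.
move: (in_reps a b aA bA abs) (in_reps c d cA dA cds); rewrite Ex !inE => /eqP ab_x /eqP cd_x.
by move: ab_x; rewrite -cd_x => -[].
Qed.

Lemma perfect_diff_QRN1 : -1 \in R.
Proof.
have [a [b [aA bA ab1]]] := perfect_diff_exists (QR1 p).
have ba : b != a by apply: contraTneq (QR_neq0 (QR1 p)) => ba; rewrite -ab1 ba subrr.
by have := hA.2 b a bA aA ba; rewrite -opprB ab1.
Qed.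

Lemma perfect_diff_odd : odd p.
Proof.
have [p2|//] := even_prime p_pr.
have [a [b [aA bA ab1]]] := perfect_diff_exists (QR1 p).
have two0 : (2%:R : F) = 0 by rewrite -[in LHS]p2 pchar_Fp_0.
have ba1 : b - a = 1.
  by rewrite -opprB ab1; apply/eqP; rewrite eq_sym -addr_eq0 -[1 + 1]/(2%:R) two0.
have [ab _] := perfect_diff_uniq (QR1 p) aA bA bA aA ab1 ba1.
by move: (QR_neq0 (QR1 p)); rewrite -ab1 ab subrr eqxx.
Qed.

Lemma card_QR_perfect_diff : #|R| = (#|A| * #|A| - #|A|)%N.
Proof.
pose D := setX A A :\: [set (a, a) | a in A].
have cardD : #|D| = (#|A| * #|A| - #|A|)%N.
  rewrite cardsD cardsX; congr (_ - _)%N.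
  have -> : setX A A :&: [set (a, a) | a in A] = [set (a, a) | a in A].
    by apply/setIidPr/subsetP=> _ /imsetP[a aA ->]; rewrite inE /= aA.
  by rewrite card_imset // => a b [].
have inD a b : ((a, b) \in D) = [&& a != b, a \in A & b \in A].
  rewrite !inE /=; case: eqVneq => [->|ab] /=.
    by case: (boolP (b \in A)) => bA; rewrite ?andbF // (imset_f (fun c => (c, c)) bA).
  suff -> : (a, b) \notin [set (c, c) | c in A] by [].
  by apply/imsetP => -[c _ [ac bc]]; rewrite ac bc eqxx in ab.
have D_R : [set ab.1 - ab.2 | ab in D] = R.
  apply/setP=> s; apply/imsetP/idP => [[[a b]] /[!inD] /and3P[ab aA bA] ->|sR].
    exact: hA.2.
  have [a [b [aA bA abs]]] := perfect_diff_exists sR.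
  exists (a, b) => //; rewrite inD aA bA !andbT.
  by apply: contraTneq (QR_neq0 sR) => ab; rewrite -abs ab subrr.
rewrite -cardD -D_R card_in_imset // => -[a b] [c d] /[!inD] /and3P[ab aA bA] /and3P[_ cA dA] /= e.
by have [-> ->] := perfect_diff_uniq (hA.2 a b aA bA ab) aA bA cA dA erefl (esym e).
Qed.

Lemma perfect_diff_card_sqr : (#|A| * #|A| = #|A| + 2 * rn_count (1%R : F))%N.
Proof.
have := card_QR_perfect_diff.
by rewrite (card_QR_rn_count p_pr perfect_diff_odd perfect_diff_QRN1); nia.
Qed.

Lemma perfect_diff_rn_count : (4 * rn_count (1%R : F)).+1 = p.
Proof.
have := card_QR p_pr perfect_diff_odd.
rewrite (card_QR_rn_count p_pr perfect_diff_odd perfect_diff_QRN1) mulnA => ->.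
by rewrite prednK ?prime_gt0.
Qed.

Lemma perfect_diff_card_sqr_lt : (#|A| * #|A| < p)%N.
Proof.
have := prime_gt1 p_pr; have := perfect_diff_rn_count; have := perfect_diff_card_sqr.
nia.
Qed.

Definition lin_reps (u v x : F) :=
  #|[set ab : F * F | (ab.1 \in A) && (ab.2 \in A) & u * ab.1 + v * ab.2 == x]|.

(* Another solution would write s as a quotient (b - a0) / (a - a0) of squares. *)
Lemma lin_reps_QNR_diag s a0 : s \in N -> a0 \in A -> lin_reps s (-1) (s * a0 - a0) = 1%N.
Proof.
move=> sN a0A; apply/eqP/cards1P; exists (a0, a0); apply/setP=> -[a b]; rewrite !inE /=.
apply/idP/idP => [/andP[/andP[aA bA] /eqP sab]|/eqP[-> ->]]; last first.
  by rewrite a0A mulN1r eqxx.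
have s_ab : s * (a - a0) = b - a0.
  apply/eqP; rewrite -subr_eq0; apply/eqP.
  by transitivity (s * a + -1 * b - (s * a0 - a0)); [ring | rewrite sab subrr].
have [aa0|aa0] := eqVneq a a0.
  by move: s_ab; rewrite aa0 subrr mulr0 => /esym/eqP; rewrite subr_eq0 => /eqP->.
have ba0 : b != a0.
  apply: contra_neq aa0 => ba0; apply/eqP; rewrite -subr_eq0; apply/eqP.
  by apply: (mulfI (QNR_neq0 sN)); rewrite s_ab ba0 subrr mulr0.
have aR := hA.2 a a0 aA a0A aa0; have bR := hA.2 b a0 bA a0A ba0.
by move: sN; rewrite inQNR (QR_mulIl aR) ?andbF // mulrC s_ab.
Qed.

Lemma lin_reps_miss u v : exists x, lin_reps u v x = 0%N.
Proof.
pose S := [set u * ab.1 + v * ab.2 | ab in setX A A].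
have S_small : (#|S| < #|[set: F]|)%N.
  rewrite cardsT card_Fp //; apply: leq_ltn_trans (leq_imset_card _ _) _.
  by rewrite cardsX perfect_diff_card_sqr_lt.
have /subsetPn[x _ xS] : ~~ ([set: F] \subset S).
  by apply: contraTN S_small => /subset_leq_card; rewrite leqNgt.
exists x.
apply/eqP; rewrite cards_eq0; apply/eqP/setP => -[a b]; rewrite !inE /=.
by apply: contraNF xS => /andP[abA /eqP <-]; apply/imsetP; exists (a, b); rewrite ?inE.
Qed.

End PerfectDifferenceSet.

Section FourierPerfectDifferenceSet.
Variable p : nat.
Hypothesis p_pr : prime p.
Local Notation F := 'F_p.
Local Notation R := (QR p).
Local Notation N := (QNR p).
Variable A : {set F}.
Hypothesis hA : perfect_diff A R.
Variables (K : fieldType) (z : K).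
Hypotheses (z_p : z ^+ p = 1) (z_neq1 : z != 1).
Local Notation psi := (psi z).

Definition hatA (t : F) : K := \sum_(a in A) psi (t * a).

Lemma hatA0 : hatA 0 = #|A|%:R.
Proof.
by rewrite /hatA (eq_bigr (fun _ => 1)) ?sumr_const // => a _; rewrite mul0r psi0.
Qed.

Lemma hatA_orthogonality u v x :
  \sum_(t : F) hatA (u * t) * hatA (v * t) * psi (- x * t) = p%:R * (lin_reps A u v x)%:R.
Proof.
have E t : hatA (u * t) * hatA (v * t) * psi (- x * t) =
    \sum_(ab | (ab.1 \in A) && (ab.2 \in A)) psi (t * (u * ab.1 + v * ab.2 - x)).
  rewrite -mulrA /hatA [X in _ * X]mulr_suml big_distrlr pair_big /=.
  apply: eq_bigr => -[a b] _ /=.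
  have -> : t * (u * a + v * b - x) = u * t * a + (v * t * b + - x * t) by ring.
  by rewrite !psiD.
rewrite (eq_bigr _ (fun t _ => E t)) exchange_big /=.
rewrite (eq_bigr (fun ab : F * F => if u * ab.1 + v * ab.2 == x then p%:R else 0)).
  rewrite -big_mkcondr /= sumr_const mulr_natr; congr (_ *+ _).
  by apply: eq_card => ab; rewrite !inE.
move=> ab _; rewrite -subr_eq0 -(sum_psi_mul p_pr z_p z_neq1).
by apply: eq_bigr => t _; rewrite mulrC.
Qed.

(* Expanding the product, each nonzero square arises exactly once as a
   difference of two elements of A. *)
Lemma hatA_norm t : hatA t * hatA (- t) = #|A|%:R + \sum_(r in R) psi (t * r).
Proof.
rewrite /hatA big_distrlr /=.
have E a : a \in A -> \sum_(b in A) psi (t * a) * psi (- t * b) =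
    1 + \sum_(b | (b \in A) && (b != a)) psi (t * (a - b)).
  move=> aA; rewrite (bigD1 a) //= -psiD //; congr (_ + _).
    by rewrite mulNr addrN psi0.
  by apply: eq_bigr => b _; rewrite -psiD //; congr psi; ring.
rewrite (eq_bigr _ E) big_split /= sumr_const; congr (_ + _).
rewrite pair_big_dep /=.
rewrite (sum_partition_fibers _ (fun ab : F * F => ab.1 - ab.2) (fun x => psi (t * x))).
rewrite [RHS]big_mkcond /=; apply: eq_bigr => x _.
have [xR|xNR] := boolP (x \in R).
  set S := [set _ | _ & _].
  have -> : S = [set ab : F * F | [&& ab.1 \in A, ab.2 \in A & ab.1 - ab.2 == x]].
    apply/setP=> -[a b]; rewrite !inE /=.
    have [/eqP abx|_] := boolP (a - b == x); last by rewrite !andbF.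
    have ba : b != a by apply: contraTneq (QR_neq0 xR) => ba; rewrite -abx ba subrr.
    by rewrite ba !andbT.
  by rewrite (hA.1 x xR) mul1r.
set S := [set _ | _ & _]; suff -> : S = set0 by rewrite cards0 mul0r.
apply/setP=> -[a b]; rewrite !inE /=.
apply/negP=> /andP[/andP[aA /andP[bA ba]] /eqP abx].
by move: xNR; rewrite -abx hA.2 // eq_sym.
Qed.

Lemma period_norm_identity :
  (#|A|%:R + period z R) * (#|A|%:R + period z N) = (rn_count (1 : F))%:R.
Proof.
have odd_p := perfect_diff_odd p_pr hA; have QRN1 := perfect_diff_QRN1 hA.
transitivity (#|A|%:R * #|A|%:R + #|A|%:R * (period z R + period z N)
              + period z R * period z N : K); first by ring.
rewrite period_QR_add_QNR // period_QR_mul_QNR // -natrM perfect_diff_card_sqr //.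
by rewrite natrD natrM; ring.
Qed.

Section Frobenius.
Variables q j : nat.
Hypotheses (q_char : q \in [pchar K]) (qj_opp : (q ^ j)%:R = -1 :> F).

(* q ^ j is a power of the characteristic and is -1 modulo p. *)
Lemma hatA_frobenius t : hatA t ^+ (q ^ j) = hatA (- t).
Proof.
have q_pr := pcharf_prime q_char.
have frob (x y : K) : (x + y) ^+ (q ^ j) = x ^+ (q ^ j) + y ^+ (q ^ j).
  by apply: exprDn_pchar; rewrite pnatX (eq_pnat _ (pcharf_eq q_char)) pnat_id.
rewrite /hatA (big_morph _ frob (id1 := 0)); last by rewrite expr0n expn_eq0 eqn0Ngt prime_gt0.
by apply: eq_bigr => a _; rewrite psi_pow_opp // mulNr.
Qed.

Lemma hatA_norm_eq0 t : hatA t * hatA (- t) = 0 -> hatA t = 0.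
Proof. by rewrite -hatA_frobenius -exprS => /eqP; rewrite expf_eq0 => /andP[_ /eqP]. Qed.

Section CharDividesRNCount.
Hypothesis rn_count_charf : (rn_count (1 : F))%:R = 0 :> K.

Lemma hatA_vanish : {in R, forall t, hatA t = 0} \/ {in N, forall t, hatA t = 0}.
Proof.
have odd_p := perfect_diff_odd p_pr hA; have QRN1 := perfect_diff_QRN1 hA.
move/eqP: period_norm_identity; rewrite rn_count_charf mulf_eq0.
case/orP=> /eqP period0; [left | right] => t tS; apply: hatA_norm_eq0.
  by rewrite hatA_norm period_QR_scale.
by rewrite hatA_norm period_QNR_scale.
Qed.

(* As -1 is a square and s is not, s * t and - t lie in different classes. *)
Lemma hatA_QNR_cross s t : s \in N -> t != 0 -> hatA (s * t) * hatA (-1 * t) = 0.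
Proof.
move=> sN t0; have odd_p := perfect_diff_odd p_pr hA; have QRN1 := perfect_diff_QRN1 hA.
have [tR|tNR] := boolP (t \in R); last have tN : t \in N by rewrite inQNR t0.
  case: hatA_vanish => hat0; first by rewrite [hatA (-1 * t)]hat0 ?mulr0 ?QR_mul.
  by rewrite hat0 ?mul0r // mulrC QR_mul_QNR.
case: hatA_vanish => hat0; first by rewrite hat0 ?mul0r ?QNR_mul.
by rewrite [hatA (-1 * t)]hat0 ?mulr0 ?QR_mul_QNR.
Qed.

Lemma lin_reps_QNR_const s x :
  s \in N -> p%:R * (lin_reps A s (-1) x)%:R = #|A|%:R * #|A|%:R :> K.
Proof.
move=> sN; rewrite -hatA_orthogonality (bigD1 0) //= big1 ?addr0 => [|t t0].
  by rewrite !mulr0 psi0 mulr1 hatA0.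
by rewrite hatA_QNR_cross // mul0r.
Qed.

End CharDividesRNCount.

Lemma rn_count_charf_neq0 : p%:R != 0 :> K -> (rn_count (1 : F))%:R != 0 :> K.
Proof.
move=> p_neq0; apply/eqP=> c0.
have [s sN] := QNR_nonempty p_pr (perfect_diff_odd p_pr hA).
have [a0 [_ [a0A _ _]]] := perfect_diff_exists hA (QR1 p).
have [x x_miss] := lin_reps_miss p_pr hA s (-1).
have := lin_reps_QNR_const c0 (s * a0 - a0) sN.
rewrite lin_reps_QNR_diag // -(lin_reps_QNR_const c0 x sN) x_miss !mulr0 mulr1 => p0.
by rewrite p0 eqxx in p_neq0.
Qed.

End Frobenius.
End FourierPerfectDifferenceSet.

Lemma Fp_natr_eq p m n : prime p -> (m%:R = n%:R :> 'F_p) <-> (m = n %[mod p])%N.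
Proof.
move=> p_pr; split=> [/(congr1 val)|mn]; first by rewrite /= !val_Fp_nat.
by apply: val_inj; rewrite /= !val_Fp_nat.
Qed.

Lemma mult_order_even_half p q j :
  prime p -> is_mult_order p q (j + j) -> (q ^ j)%:R = -1 :> 'F_p.
Proof.
move=> p_pr [jj_gt0 qjj jj_min]; set x : 'F_p := (q ^ j)%:R.
have x_sqr : x ^+ 2 = 1.
  by rewrite -natrX -expnM muln2 -addnn -[1]/(1%:R); apply/Fp_natr_eq.
have : (x - 1) * (x + 1) == 0 by rewrite -subr_sqr x_sqr expr1n subrr.
rewrite mulf_eq0 subr_eq0 addr_eq0 => /orP[/eqP x1|/eqP //].
have /jj_min : (q ^ j = 1 %[mod p])%N by apply/(Fp_natr_eq _ _ p_pr).
lia.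
Qed.

Lemma exists_charf_root_of_unity p q k :
  prime p -> prime q -> (0 < k)%N -> (q ^ k = 1 %[mod p])%N ->
  exists (K : fieldType) (z : K), [/\ q \in [pchar K], z ^+ p = 1 & z != 1].
Proof.
move=> p_pr q_pr k_gt0 qk; have [K q_char cardK] := pPrimePowerField q_pr k_gt0.
have p_dvd_units : (p %| #|[set: {unit K}]|)%N.
  rewrite card_finField_unit cardK -subn1 -eqn_mod_dvd ?qk //.
  by rewrite expn_gt0 prime_gt0.
have [u _ ord_u] := @Cauchy _ p [set: {unit K}]%G p_pr p_dvd_units.
exists K, (val u); split => //; first by rewrite -val_unitX -ord_u expg_order.
apply: contraTneq (prime_gt1 p_pr) => u1.
by rewrite -ord_u (_ : u = 1%g) ?order1 //; apply: val_inj.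
Qed.

Theorem theorem4 (p : nat) (hp : prime p) :
  (exists A : {set 'F_p}, perfect_diff A (QR p)) ->
  forall q : nat, prime q -> (q %| (p - 1) %/ 4)%N ->
  forall k : nat, is_mult_order p q k -> odd k.
Proof.
move=> [A hA] q q_pr; set c := rn_count (1%R : 'F_p).
have p_4c : p = (4 * c).+1 by rewrite (perfect_diff_rn_count hp hA).
have -> : ((p - 1) %/ 4)%N = c by rewrite p_4c subn1 mulKn.
move=> q_dvd_c k k_ord; apply: contraT => k_even.
have [k_gt0 qk_mod _] := k_ord.
have [K [z [q_char z_p z_neq1]]] := exists_charf_root_of_unity hp q_pr k_gt0 qk_mod.
have k_half : (k./2 + k./2)%N = k by rewrite addnn -[RHS]odd_double_half (negbTE k_even).
have q_opp : (q ^ k./2)%:R = -1 :> 'F_p by apply: mult_order_even_half; rewrite ?k_half.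
have p_neq0 : p%:R != 0 :> K.
  have c_gt0 : (0 < c)%N by have := prime_gt1 hp; lia.
  rewrite -(dvdn_pcharf q_char) dvdn_prime2 //; apply/eqP => q_p.
  by have := dvdn_leq c_gt0 q_dvd_c; lia.
have := rn_count_charf_neq0 hp hA z_p z_neq1 q_char q_opp p_neq0.
by rewrite -(dvdn_pcharf q_char) q_dvd_c.
Qed.
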